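(* Let $M$ be a regular singular difference module over $K$. Write $M=K\otimes_{\mathbb C}V$, where $V$ is a finite-dimensional $\mathbb C$-vector space with $A\in \mathrm{GL}(V)$ all of whose eigenvalues $\alpha$ satisfy $|q|<|\alpha|\le 1$, and $\Phi(a\otimes v)=\phi(a)\otimes A(v)$ for $a\in K$, $v\in V$ (such a presentation exists). Let $M_{global}\subset M$ be the set of $m\in M$ such that the $\mathbb C$-vector space spanned by $\{\Phi^n m\mid n\ge 0\}$ is finite-dimensional. Then $M_{global}=\mathbb C[z,z^{-1}]\otimes_{\mathbb C}V$, and consequently the natural map $K\otimes_{\mathbb C[z,z^{-1}]}M_{global}\to M$ is an isomorphism.
   Context: Fix $q\in\mathbb C$ with $0<|q|<1$. A difference ring is a commutative ring $R$ with an automorphism $\phi$; a difference module over $R$ is a free $R$-module $M$ of finite rank with an additive bijection $\Phi:M\to M$ satisfying $\Phi(rm)=\phi(r)\Phi(m)$. $K=\mathbb C(\{z\})$ denotes the field of convergent Laurent series (germs at $0$ of meromorphic functions), with $\phi(f)(z)=f(qz)$; $\mathbb C[z,z^{-1}]$ is a difference subring. A difference module $M$ over $K$ is regular singular if there is a $K$-basis $e_1,\dots,e_m$ of $M$ such that the lattice $\mathbb C\{z\}e_1\oplus\cdots\oplus\mathbb C\{z\}e_m$ is mapped onto itself by $\Phi$ and $\Phi^{-1}$ (here $\mathbb C\{z\}$ is the ring of convergent power series). *)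

From HB Require Import structures.
From mathcomp Require Import all_boot all_order all_algebra.
From mathcomp Require Import complex.
From mathcomp Require Import reals.
Set Implicit Arguments. Unset Strict Implicit. Unset Printing Implicit Defensive.
Import Order.TTheory GRing.Theory Num.Theory.
Local Open Scope ring_scope.

Section Defs.
Variable R : realType.
Local Notation C := R[i].

(* A Laurent series over C, given by its coefficient family c : int -> C
   (f = sum_k c k z^k).  It is a convergent Laurent series (an element of
   K = C({z})) if its coefficients vanish for k << 0 and the power series
   has a positive radius of convergence, i.e. |c k| r^k is bounded for
   some r > 0. *)
Definition conv_laurent (c : int -> C) : Prop :=
  (exists N : int, forall k : int, k < N -> c k = 0) /\
  (exists r : R, 0 < r /\ exists B : R, forall k : int, ComplexField.Normc.normc (c k) * r ^ k <= B).

Definition laurent_poly (c : int -> C) : Prop :=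
  exists N : nat, forall k : int, (N%:Z < `|k|%R)%R -> c k = 0.

(* M = K (x)_C V with V = C^n: elements are n-tuples of convergent Laurent
   series, m = sum_j m j (x) e_j. *)
Definition inM (n : nat) (m : 'I_n -> int -> C) : Prop :=
  forall i, conv_laurent (m i).

(* Phi (a (x) v) = phi(a) (x) A v, with phi(f)(z) = f(qz), i.e. on coefficients
   c_k |-> q^k c_k.  Hence (Phi m)_i = sum_j A i j * phi(m_j). *)
Definition Phi (n : nat) (q : C) (A : 'M[C]_n) (m : 'I_n -> int -> C)
  : 'I_n -> int -> C :=
  fun i k => q ^ k * \sum_(j < n) A i j * m j k.

Definition M_global (n : nat) (q : C) (A : 'M[C]_n) (m : 'I_n -> int -> C)
  : Prop :=
  inM m /\
  exists s : seq ('I_n -> int -> C),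
    forall p : nat, exists c : 'I_(size s) -> C,
      forall i k, iter p (Phi q A) m i k
                  = \sum_(j < size s) c j * (nth (fun _ _ => 0) s j) i k.

Definition laurent_poly_vec (n : nat) (m : 'I_n -> int -> C) : Prop :=
  forall i, laurent_poly (m i).

End Defs.

From HB Require Import structures.
From mathcomp Require Import all_boot all_order all_algebra.
From mathcomp Require Import complex reals.
From mathcomp Require Import zify.
From Stdlib Require Import Classical ClassicalEpsilon.
Import Order.TTheory GRing.Theory Num.Theory.
Local Open Scope ring_scope.
Set Implicit Arguments. Unset Strict Implicit. Unset Printing Implicit Defensive.

(** If m spans a finite-dimensional space under Phi, then P(Phi) m = 0 for
    some nonzero polynomial P.  On the column of z^k-coefficients Phi acts
    as the matrix q^k A, so P(q^k A) kills that column; if the column is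
    nonzero, some root z of P is an eigenvalue q^k a of q^k A, and
    |q| < |a| <= 1 confines |z| to the annulus |q|^(k+1) < |z| <= |q|^k.
    These annuli are disjoint, so each of the finitely many roots of P
    accounts for at most one k: m is a Laurent polynomial.  Conversely, Phi
    preserves the support of m coefficientwise, and functions supported on
    a fixed finite box form a finite-dimensional space. *)

Local Notation normc := ComplexField.Normc.normc.

Lemma normc_exprz (R : rcfType) (x : R[i]) (k : int) : normc (x ^ k) = normc x ^ k.
Proof.
have normcX (p : nat) : normc (x ^+ p) = normc x ^+ p.
  elim: p => [|p IHp]; first by rewrite !expr0 ComplexField.Normc.normc1.
  by rewrite !exprS ComplexField.Normc.normcM IHp.
by case: k => p; rewrite ?ComplexField.Normc.normcV normcX.
Qed.

Lemma ltr_iXz2l (R : realFieldType) (x : R) : 0 < x -> x < 1 ->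
  {mono exprz x : m n /~ m < n}.
Proof.
move=> x_gt0 x_lt1 m n /=.
have x'_gt1 : 1 < x^-1 by rewrite invf_gt1.
have xE k : x ^ k = x^-1 ^ (- k) by rewrite exprz_inv opprK.
by rewrite !xE ltr_eXz2l // ltrN2.
Qed.

Lemma annulus_uniq (R : realFieldType) (r : R) : 0 < r -> r < 1 ->
  forall (x : R) (k1 k2 : int),
  r ^ (k1 + 1) < x <= r ^ k1 -> r ^ (k2 + 1) < x <= r ^ k2 -> k1 = k2.
Proof.
move=> r_gt0 r_lt1 x k1 k2 /andP[lt1 le1] /andP[lt2 le2].
have := lt_le_trans lt1 le2; have := lt_le_trans lt2 le1.
rewrite !ltr_iXz2l //; lia.
Qed.

Lemma functional_rel_bounded (T : eqType) (g : T -> int -> Prop) (s : seq T) :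
  (forall z k1 k2, g z k1 -> g z k2 -> k1 = k2) ->
  exists N : nat, forall z k, z \in s -> g z k -> `|k| <= N%:Z.
Proof.
move=> g_fun; elim: s => [|z s [N leN]]; first by exists 0%N.
have [[k0 gk0]|no_k] := classic (exists k0, g z k0).
  exists (maxn N `|k0|%N) => z' k; rewrite in_cons => /orP[/eqP-> gk|z's gk].
    by rewrite (g_fun _ _ _ gk gk0) -abszE lez_nat leq_maxr.
  by apply: le_trans (leN _ _ z's gk) _; rewrite lez_nat leq_maxl.
exists N => z' k; rewrite in_cons => /orP[/eqP-> gk|]; last exact: leN.
by case: no_k; exists k.
Qed.

Section Eigenvalues.
Variables (F : fieldType) (n : nat).

Lemma eigenvalue_det (A : 'M[F]_n) a : eigenvalue A a = (\det (A - a%:M) == 0).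
Proof.
by rewrite /eigenvalue /eigenspace kermx_eq0 row_free_unit unitmxE unitfE negbK.
Qed.

Lemma eigenvalueZ (A : 'M[F]_n) c a :
  c != 0 -> eigenvalue (c *: A) (c * a) = eigenvalue A a.
Proof.
move=> c_neq0; rewrite !eigenvalue_det -scale_scalar_mx -scalerBr detZ.
by rewrite mulf_eq0 expf_eq0 (negbTE c_neq0) andbF.
Qed.

Lemma horner_mx_rVpoly (B : 'M[F]_n.+1) d (w : 'rV[F]_d) :
  horner_mx B (rVpoly w) = \sum_(p < d) w 0 p *: B ^+ p.
Proof.
rewrite [rVpoly w]poly_def linear_sum; apply: eq_bigr => p _ /=.
by rewrite valK linearZ /= rmorphXn /= horner_mx_X.
Qed.

Lemma det_horner_mx_split (B : 'M[F]_n.+1) c (s : seq F) :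
  \det (horner_mx B (c *: \prod_(z <- s) ('X - z%:P))) =
  c ^+ n.+1 * \prod_(z <- s) \det (B - z%:M).
Proof.
rewrite linearZ /= rmorph_prod /= detZ (big_morph _ (@det_mulmx F n.+1) (@det1 F n.+1)).
by congr (_ * _); apply: eq_bigr => z _; rewrite rmorphB /= horner_mx_X horner_mx_C.
Qed.
End Eigenvalues.

Lemma horner_mx_kernel_eigenvalue (F : closedFieldType) n (B : 'M[F]_n.+1)
    (P : {poly F}) (v : 'cV[F]_n.+1) :
  P != 0 -> v != 0 -> horner_mx B P *m v = 0 -> exists2 z, root P z & eigenvalue B z.
Proof.
move=> P_neq0 v_neq0 PBv0.
have /eqP detPB0 : \det (horner_mx B P) == 0.
  by rewrite -det_tr; apply/det0P; exists v^T; rewrite ?trmx_eq0 // -trmx_mul PBv0 trmx0.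
have [s] := closed_field_poly_normal P.
have : lead_coef P != 0 by rewrite lead_coef_eq0.
move: (lead_coef P) => c c_neq0 Ps.
move: detPB0; rewrite Ps det_horner_mx_split => /eqP.
rewrite mulf_eq0 expf_eq0 (negbTE c_neq0) andbF prodf_seq_eq0 => /hasP[z zs /= detz0].
exists z; first by rewrite rootZ // (root_prod_XsubC s z).
by rewrite (eigenvalue_det B z).
Qed.

Lemma closed_roots_finite (F : closedFieldType) (P : {poly F}) :
  P != 0 -> exists s : seq F, forall z, root P z -> z \in s.
Proof.
move=> P_neq0; have [s] := closed_field_poly_normal P.
have : lead_coef P != 0 by rewrite lead_coef_eq0.
move: (lead_coef P) => c c_neq0 Ps; exists s => z.
by rewrite Ps rootZ // (root_prod_XsubC s z).
Qed.

Lemma span_dependent (F : fieldType) (X : Type) d (s : 'I_d -> X -> F) (f : nat -> X -> F) :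
  (forall p, exists c : 'I_d -> F, forall x, f p x = \sum_(j < d) c j * s j x) ->
  exists2 w : 'rV[F]_d.+1, w != 0 & forall x, \sum_(p < d.+1) w 0 p * f p x = 0.
Proof.
move=> /choice[c fE].
pose Mc : 'M[F]_(d.+1, d) := \matrix_(p, j) c p j.
have : kermx Mc != 0.
  rewrite kermx_eq0; apply: contraTN (rank_leq_col Mc) => /eqP->.
  by rewrite ltnn.
case/rowV0Pn => w /sub_kermxP wMc0 w_neq0; exists w => // x.
transitivity (\sum_(j < d) (w *m Mc) 0 j * s j x); last first.
  by rewrite wMc0 big1 // => j _; rewrite mxE mul0r.
under eq_bigr do rewrite fE mulr_sumr.
rewrite exchange_big /=; apply: eq_bigr => j _; rewrite mxE mulr_suml.
by apply: eq_bigr => p _; rewrite mxE mulrA.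
Qed.

Section FiniteSupport.
Variables (F : nzRingType) (I : finType) (N : nat).

Definition box_point (x : I * 'I_(N.*2).+1) : I * int := (x.1, x.2%:Z - N%:Z).

Definition box_delta x : I -> int -> F := fun i k => (box_point x == (i, k))%:R.

Lemma box_point_inj : injective box_point.
Proof.
move=> [i l] [i' l'] [-> /eqP]; rewrite (inj_eq (addIr _)) => /eqP/(congr1 absz) /= ll'.
by congr (_, _); apply: val_inj.
Qed.

Lemma box_pointP i (k : int) : `|k| <= N%:Z -> exists x, box_point x = (i, k).
Proof.
move=> le_kN; have lt_l : (absz (k + N%:Z)%R < (N.*2).+1)%N by lia.
by exists (i, Ordinal lt_l); congr (_, _); rewrite /= gez0_abs; lia.
Qed.

Lemma finite_support_span :
  exists s : seq (I -> int -> F), forall f : I -> int -> F,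
    (forall i k, N%:Z < `|k| -> f i k = 0) ->
    exists c : 'I_(size s) -> F,
      forall i k, f i k = \sum_(j < size s) c j * nth (fun _ _ => 0) s j i k.
Proof.
pose s := map box_delta (enum {: I * 'I_(N.*2).+1}).
exists s => f f_supp.
pose coord (b : I -> int -> F) :=
  \sum_x f (box_point x).1 (box_point x).2 * b (box_point x).1 (box_point x).2.
have coord_delta y : coord (box_delta y) = f (box_point y).1 (box_point y).2.
  rewrite /coord (bigD1 y) // big1 => [|x neq_xy].
    by rewrite /box_delta -surjective_pairing eqxx mulr1 /= addr0.
  rewrite /box_delta -surjective_pairing (inj_eq box_point_inj) eq_sym.
  by rewrite (negbTE neq_xy) mulr0.
exists (fun j => coord (nth (fun _ _ => 0) s j)) => i k.
rewrite -(big_mkord xpredT (fun j => coord (nth _ s j) * nth _ s j i k)).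
rewrite -(big_nth _ xpredT (fun b => coord b * b i k)) big_map big_enum /=.
under eq_bigr do rewrite coord_delta.
have [le_kN|lt_Nk] := lerP `|k| N%:Z; last first.
  rewrite f_supp // big1 // => x _; rewrite /box_delta.
  by case: eqP => [-> /=|_]; rewrite ?mulr0 // f_supp ?mul0r.
have [y yE] := box_pointP i le_kN.
rewrite (bigD1 y) // big1 => [|x neq_xy].
  by rewrite /box_delta yE eqxx mulr1 /= addr0.
by rewrite /box_delta -yE (inj_eq box_point_inj) (negbTE neq_xy) mulr0.
Qed.
End FiniteSupport.

Section DifferenceModule.
Variables (R : realType) (n : nat) (q : R[i]) (A : 'M[R[i]]_n).

Definition coef_col (m : 'I_n -> int -> R[i]) (k : int) : 'cV[R[i]]_n := \col_i m i k.

Lemma iter_Phi m p i k :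
  iter p (Phi q A) m i k = ((q ^ k *: A) ^+ p *m coef_col m k) i 0.
Proof.
elim: p i => [|p IHp] i /=; first by rewrite expr0 mul1mx mxE.
rewrite exprS -mulmxE -mulmxA mxE /Phi mulr_sumr; apply: eq_bigr => j _.
by rewrite IHp !mxE mulrA.
Qed.

Lemma laurent_poly_M_global m : inM m -> laurent_poly_vec m -> M_global q A m.
Proof.
move=> m_in /choice[Nm Nm_supp]; split => //.
pose N := (\max_i Nm i)%N.
have m_supp i k : N%:Z < `|k| -> m i k = 0.
  move=> lt_Nk; apply: Nm_supp; apply: le_lt_trans lt_Nk.
  by rewrite lez_nat; exact: leq_bigmax.
have [s s_span] := finite_support_span (R[i]) ('I_n) N.
exists s => p; apply: s_span => i k lt_Nk.
rewrite iter_Phi; suff -> : coef_col m k = 0 by rewrite mulmx0 mxE.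
by apply/matrixP => j l; rewrite !mxE m_supp.
Qed.
End DifferenceModule.

Section RegularSingular.
Variables (R : realType) (n : nat) (q : R[i]) (A : 'M[R[i]]_n.+1).
Hypothesis q_bounds : 0 < normc q < 1.
Hypothesis eigenvalue_bounds : forall a, eigenvalue A a -> normc q < normc a <= 1.

Lemma horner_coef_col m d (w : 'rV[R[i]]_d) k :
  horner_mx (q ^ k *: A) (rVpoly w) *m coef_col m k
  = \col_i \sum_(p < d) w 0 p * iter p (Phi q A) m i k.
Proof.
rewrite horner_mx_rVpoly mulmx_suml; apply/matrixP => i j.
rewrite ord1 summxE mxE; apply: eq_bigr => p _.
by rewrite iter_Phi -scalemxAl mxE.
Qed.

Lemma eigenvalue_annulus k z :
  eigenvalue (q ^ k *: A) z -> normc q ^ (k + 1) < normc z <= normc q ^ k.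
Proof.
case/andP: q_bounds => q_gt0 _.
have q_neq0 : q != 0.
  by apply: contraTneq q_gt0 => ->; rewrite ComplexField.Normc.normc0 ltxx.
have qk_neq0 := expfz_neq0 k q_neq0.
rewrite -(divfK qk_neq0 z) [_ * q ^ k]mulrC; move: (z / q ^ k) => a.
rewrite eigenvalueZ // => /eigenvalue_bounds.
have rk_gt0 : 0 < normc q ^ k := exprz_gt0 k q_gt0.
rewrite ComplexField.Normc.normcM normc_exprz expfzDr ?gt_eqF // expr1z.
by rewrite ltr_pM2l // ger_pMr.
Qed.

Lemma M_global_laurent_poly m : M_global q A m -> laurent_poly_vec m.
Proof.
case/andP: q_bounds => q_gt0 q_lt1 [_ [s s_span]].
have s_span' p : exists c : 'I_(size s) -> R[i], forall x : 'I_n.+1 * int,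
    iter p (Phi q A) m x.1 x.2 = \sum_(j < size s) c j * nth (fun _ _ => 0) s j x.1 x.2.
  by have [c cE] := s_span p; exists c => -[i k]; exact: cE.
have [w w_neq0 w_rel] := span_dependent s_span'.
have P_neq0 : rVpoly w != 0.
  by apply: contra w_neq0 => /eqP P0; rewrite -(rVpolyK w) P0 linear0.
have P_kills k : horner_mx (q ^ k *: A) (rVpoly w) *m coef_col m k = 0.
  by rewrite horner_coef_col; apply/matrixP => i j; rewrite !mxE (w_rel (i, k)).
have [rs rs_roots] := closed_roots_finite P_neq0.
have [N leN] := functional_rel_bounded rs
  (g := fun z k => normc q ^ (k + 1) < normc z <= normc q ^ k)
  (fun z => annulus_uniq q_gt0 q_lt1 (x := normc z)).
move=> i; exists N => k; apply: contraTeq => mik_neq0; rewrite -leNgt.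
have col_neq0 : coef_col m k != 0.
  by apply: contra mik_neq0 => /eqP/matrixP/(_ i 0); rewrite !mxE => ->.
have [z Pz eig_z] := horner_mx_kernel_eigenvalue P_neq0 col_neq0 (P_kills k).
exact: leN (rs_roots _ Pz) (eigenvalue_annulus eig_z).
Qed.
End RegularSingular.

Theorem lemma1p1 (R : realType) (n : nat) (q : R[i]) (A : 'M[R[i]]_n) :
  0 < ComplexField.Normc.normc q < 1 ->
  A \in unitmx ->
  (forall a : R[i], eigenvalue A a -> ComplexField.Normc.normc q < ComplexField.Normc.normc a <= 1) ->
  forall m : 'I_n -> int -> R[i],
    M_global q A m <-> (inM m /\ laurent_poly_vec m).
Proof.
(* Invertibility of A is implied by the lower bound on its eigenvalues. *)
move=> q_bounds _ eigA m; split => [m_glob | [m_in m_lp]].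
  split; first by case: m_glob.
  case: n A eigA m m_glob => [|n] A eigA m m_glob; first by case.
  exact: M_global_laurent_poly m_glob.
exact: laurent_poly_M_global.
Qed.
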